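(* Let $\mathbb{X}$ be a set, $f:\mathbb{X}\to\mathbb{X}$ a bijection, $h:\mathbb{X}\to\mathbb{R}$ bounded with $\upsilon_h=\sup_{x\in\mathbb{X}}|h(x)|$, $m\ge1$ and $\ell>m$ integers, and $\beta\in(0,1)$. For $x\in\mathbb{X}$ and $k\in\{0,\dots,m-1\}$ let $$\zeta_k(x)=\sum_{t=0}^\infty\binom{k+t}{k}\beta^t(1-\beta)^{k+1}h\big(f^{-(k+t+1)}(x)\big),\qquad \tilde z_k(x)=\sum_{t=0}^{\ell-m}\binom{k+t}{k}\beta^t(1-\beta)^{k+1}h\big(f^{-(k+t+1)}(x)\big),$$ and $\zeta(x)=(\zeta_0(x),\dots,\zeta_{m-1}(x))$, $\tilde z(x)=(\tilde z_0(x),\dots,\tilde z_{m-1}(x))$. Suppose $\tilde\beta=\beta\big(1+\frac{m-1}{\ell-m}\big)<1$, i.e., $\ell>m+\frac{m-1}{\beta^{-1}-1}$. Then for every $x\in\mathbb{X}$, $$\|\tilde z(x)-\zeta(x)\|\le\binom{\ell-1}{m-1}\sqrt m\,\upsilon_h\,\frac{1-\beta}{1-\tilde\beta}\,\tilde\beta\,\beta^{\ell-m}.$$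
   Context: $\|\cdot\|$ is the Euclidean norm on $\mathbb{R}^m$; $f^{-j}$ is the $j$-fold composition of $f^{-1}$. In the paper, $\tilde z(x^{(i)})$ is computed from a backward orbit $x^{(i)},f^{-1}(x^{(i)}),\dots,f^{-\ell}(x^{(i)})$ of a sample point. *)

From Stdlib Require Import Reals.
From Coquelicot Require Import Coquelicot.
Open Scope R_scope.

Definition binomR (n k : nat) : R := Binomial.C n k.

Definition finv_iter {X : Type} (finv : X -> X) (j : nat) (x : X) : X :=
  Nat.iter j finv x.

Definition zeta_term {X : Type} (finv : X -> X) (h : X -> R) (beta : R)
  (k : nat) (x : X) (t : nat) : R :=
  binomR (k + t) k * beta ^ t * (1 - beta) ^ (k + 1)
  * h (finv_iter finv (k + t + 1) x).

Definition zeta {X : Type} (finv : X -> X) (h : X -> R) (beta : R)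
  (k : nat) (x : X) : R :=
  Series (zeta_term finv h beta k x).

Definition ztilde {X : Type} (finv : X -> X) (h : X -> R) (beta : R)
  (l m k : nat) (x : X) : R :=
  sum_f_R0 (zeta_term finv h beta k x) (l - m).

Definition eucl_norm (m : nat) (u : nat -> R) : R :=
  sqrt (sum_f_R0 (fun k => (u k) ^ 2) (m - 1)).

From Stdlib Require Import Reals Lra Lia.
From Coquelicot Require Import Coquelicot.
Open Scope R_scope.

(* The coefficients [c_k(t) = binom(k+t, k) beta^t] satisfy
   [c_k(t+1) / c_k(t) = beta (k+t+1)/(t+1) <= beta (1 + (m-1)/(l-m))] once
   [t >= l-m], so beyond the truncation point the terms of [zeta_k] are
   dominated by a geometric series of ratio [beta~ < 1]; summing it bounds
   each coordinate of [ztilde - zeta], and [binom(k+l-m, k) (1-beta)^k] is at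
   most [binom(l-1, m-1)] for every [k < m].  The factor [sqrt m] passes from
   the coordinatewise bound to the Euclidean norm. *)

Lemma binomR_nonneg (n k : nat) : 0 <= binomR n k.
Proof.
  unfold binomR, Binomial.C.
  apply Rdiv_le_0_compat; [apply pos_INR|].
  apply Rmult_lt_0_compat; apply INR_fact_lt_0.
Qed.

Lemma binomR_diag (n : nat) : binomR n n = 1.
Proof.
  unfold binomR, Binomial.C. rewrite Nat.sub_diag. change (INR (Factorial.fact 0)) with 1.
  field. apply INR_fact_neq_0.
Qed.

Lemma binomR_le_succ (k t : nat) : binomR (k + t) k <= binomR (S k + t) (S k).
Proof.
  destruct t as [|t].
  - rewrite !Nat.add_0_r, !binomR_diag. lra.
  - pose proof (binomR_nonneg (k + S t) (S k)). unfold binomR in *.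
    rewrite Nat.add_succ_l, <- pascal by lia. lra.
Qed.

Lemma binomR_le_shift (k k' t : nat) :
  (k <= k')%nat -> binomR (k + t) k <= binomR (k' + t) k'.
Proof.
  induction 1 as [|k' _ IH]; [lra|].
  eapply Rle_trans; [exact IH | apply binomR_le_succ].
Qed.

Definition nbinom_coef (k : nat) (beta : R) (t : nat) : R :=
  binomR (k + t) k * beta ^ t.

Lemma nbinom_coef_nonneg (k : nat) (beta : R) (t : nat) :
  0 <= beta -> 0 <= nbinom_coef k beta t.
Proof.
  intro Hb. apply Rmult_le_pos; [apply binomR_nonneg | now apply pow_le].
Qed.

Lemma nbinom_coef_succ (k : nat) (beta : R) (t : nat) :
  nbinom_coef k beta (S t)
  = beta * (INR (S (k + t)) / INR (S t)) * nbinom_coef k beta t.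
Proof.
  unfold nbinom_coef, binomR.
  rewrite Nat.add_succ_r, pascal_step2 by lia.
  replace (S (k + t) - k)%nat with (S t) by lia.
  simpl (beta ^ S t). ring.
Qed.

Lemma nbinom_coef_ratio_le (k m1 n t : nat) (beta : R) :
  0 <= beta -> (k <= m1)%nat -> (0 < n)%nat -> (n <= t)%nat ->
  nbinom_coef k beta (S t)
  <= beta * (1 + INR m1 / INR n) * nbinom_coef k beta t.
Proof.
  intros Hb Hk Hn Ht.
  rewrite nbinom_coef_succ.
  apply Rmult_le_compat_r; [now apply nbinom_coef_nonneg|].
  apply Rmult_le_compat_l; [exact Hb|].
  assert (HSt : 0 < INR (S t)) by (apply lt_0_INR; lia).
  replace (INR (S (k + t)) / INR (S t)) with (1 + INR k / INR (S t))
    by (rewrite <- Nat.add_succ_r, plus_INR; field; lra).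
  apply Rplus_le_compat_l. unfold Rdiv.
  apply Rmult_le_compat; [apply pos_INR | left; now apply Rinv_0_lt_compat
    | apply le_INR; lia | ].
  apply Rinv_le_contravar; [apply lt_0_INR; lia | apply le_INR; lia].
Qed.

Lemma geom_decay_from (a : nat -> R) (q : R) (n : nat) :
  0 <= q -> (forall t, (n <= t)%nat -> a (S t) <= q * a t) ->
  forall j, a (n + j)%nat <= q ^ j * a n.
Proof.
  intros Hq Ha j. induction j as [|j IH].
  - rewrite Nat.add_0_r. simpl. lra.
  - rewrite Nat.add_succ_r. simpl (q ^ S j).
    eapply Rle_trans; [apply Ha; lia|].
    rewrite Rmult_assoc. now apply Rmult_le_compat_l.
Qed.

Lemma series_tail_geom_le (u : nat -> R) (K q : R) (n : nat) :
  0 <= q < 1 -> (forall j, Rabs (u (S n + j)%nat) <= K * q ^ j) ->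
  Rabs (sum_f_R0 u n - Series u) <= K / (1 - q).
Proof.
  intros Hq Hu.
  assert (Hgeo : is_series (fun j => K * q ^ j) (K / (1 - q))).
  { apply (is_series_scal_l K (fun j => q ^ j)), is_series_geom.
    rewrite Rabs_pos_eq; lra. }
  assert (Htail : ex_series (fun j => Rabs (u (S n + j)%nat))).
  { apply (@ex_series_le R_AbsRing R_CompleteNormedModule _ (fun j => K * q ^ j)).
    - intro j. change (Rabs (Rabs (u (S n + j)%nat)) <= K * q ^ j).
      rewrite Rabs_Rabsolu. apply Hu.
    - eexists; exact Hgeo. }
  assert (Hu_ex : ex_series u)
    by (apply (ex_series_incr_n _ (S n)), ex_series_Rabs, Htail).
  rewrite (Series_incr_n u (S n)); [simpl Nat.pred | lia | exact Hu_ex].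
  rewrite Rabs_minus_sym, Rplus_minus_l.
  eapply Rle_trans; [apply Series_Rabs, Htail|].
  rewrite <- (is_series_unique _ _ Hgeo).
  apply Series_le; [intro j; split; [apply Rabs_pos | apply Hu] | eexists; exact Hgeo].
Qed.

Lemma zeta_term_abs_le {X : Type} (finv : X -> X) (h : X -> R) (vh beta : R)
  (k : nat) (x : X) (t : nat) :
  (forall y, Rabs (h y) <= vh) -> 0 <= beta <= 1 ->
  Rabs (zeta_term finv h beta k x t)
  <= nbinom_coef k beta t * (1 - beta) ^ (k + 1) * vh.
Proof.
  intros Hh Hb. unfold zeta_term. fold (nbinom_coef k beta t).
  assert (0 <= nbinom_coef k beta t * (1 - beta) ^ (k + 1)).
  { apply Rmult_le_pos; [apply nbinom_coef_nonneg | apply pow_le]; lra. }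
  rewrite Rabs_mult, Rabs_pos_eq by assumption.
  now apply Rmult_le_compat_l.
Qed.

Lemma truncation_error_le {X : Type} (finv : X -> X) (h : X -> R) (vh beta : R)
  (m1 n k : nat) (x : X) :
  (forall y, Rabs (h y) <= vh) -> 0 < beta < 1 ->
  (0 < n)%nat -> (k <= m1)%nat -> beta * (1 + INR m1 / INR n) < 1 ->
  Rabs (sum_f_R0 (zeta_term finv h beta k x) n - zeta finv h beta k x)
  <= binomR (m1 + n) m1 * vh
     * ((1 - beta) / (1 - beta * (1 + INR m1 / INR n)))
     * (beta * (1 + INR m1 / INR n)) * beta ^ n.
Proof.
  intros Hh Hb Hn Hk Hq.
  set (q := beta * (1 + INR m1 / INR n)) in *.
  assert (Hq0 : 0 <= q).
  { apply Rmult_le_pos; [lra|].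
    assert (0 <= INR m1 / INR n) by (apply Rdiv_le_0_compat; [apply pos_INR | apply lt_0_INR; lia]).
    lra. }
  assert (Hvh : 0 <= vh) by (eapply Rle_trans; [apply Rabs_pos | apply (Hh x)]).
  assert (Hw : 0 <= (1 - beta) ^ (k + 1)) by (apply pow_le; lra).
  assert (Hdecay := geom_decay_from (nbinom_coef k beta) q n Hq0
    (fun t Ht => nbinom_coef_ratio_le k m1 n t beta ltac:(lra) Hk Hn Ht)).
  eapply Rle_trans.
  { apply (series_tail_geom_le _ (nbinom_coef k beta n * q * (1 - beta) ^ (k + 1) * vh) q n);
      [lra|].
    intro j. eapply Rle_trans; [apply zeta_term_abs_le; [exact Hh | lra]|].
    replace (S n + j)%nat with (n + S j)%nat by lia.
    replace (nbinom_coef k beta n * q * (1 - beta) ^ (k + 1) * vh * q ^ j)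
      with (q ^ S j * nbinom_coef k beta n * (1 - beta) ^ (k + 1) * vh) by (simpl; ring).
    apply Rmult_le_compat_r; [exact Hvh|].
    apply Rmult_le_compat_r; [exact Hw | apply Hdecay]. }
  assert (Hcoef : (1 - beta) ^ k * binomR (k + n) k <= binomR (m1 + n) m1).
  { assert (Hpow : (1 - beta) ^ k <= 1 ^ k) by (apply pow_incr; lra).
    rewrite pow1 in Hpow.
    pose proof (binomR_le_shift k m1 n Hk).
    pose proof (binomR_nonneg (k + n) k). pose proof (pow_le (1 - beta) k).
    nra. }
  set (P := (1 - beta) * vh * q * beta ^ n / (1 - q)).
  assert (HP : 0 <= P).
  { apply Rdiv_le_0_compat; [|lra].
    pose proof (pow_le beta n ltac:(lra)).
    apply Rmult_le_pos; [apply Rmult_le_pos; [apply Rmult_le_pos|]|]; lra. }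
  unfold nbinom_coef.
  replace (binomR (k + n) k * beta ^ n * q * (1 - beta) ^ (k + 1) * vh / (1 - q))
    with ((1 - beta) ^ k * binomR (k + n) k * P) by (unfold P; rewrite pow_add; field; lra).
  replace (binomR (m1 + n) m1 * vh * ((1 - beta) / (1 - q)) * q * beta ^ n)
    with (binomR (m1 + n) m1 * P) by (unfold P; field; lra).
  now apply Rmult_le_compat_r.
Qed.

Lemma eucl_norm_le (m : nat) (u : nat -> R) (B : R) :
  (1 <= m)%nat -> (forall k, (k < m)%nat -> Rabs (u k) <= B) ->
  eucl_norm m u <= sqrt (INR m) * B.
Proof.
  intros Hm Hu.
  assert (HB : 0 <= B) by (eapply Rle_trans; [apply Rabs_pos | apply (Hu 0%nat); lia]).
  unfold eucl_norm. eapply Rle_trans.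
  - apply sqrt_le_1_alt, (sum_Rle _ (fun _ => B ^ 2)). intros k Hk.
    rewrite <- pow2_abs. apply pow_incr. split; [apply Rabs_pos | apply Hu; lia].
  - rewrite sum_cte. replace (S (m - 1)) with m by lia.
    rewrite sqrt_mult, sqrt_pow2 by (auto using pow2_ge_0, pos_INR).
    right; ring.
Qed.

Theorem lemma2 (X : Type) (f finv : X -> X)
  (Hf1 : forall x, f (finv x) = x) (Hf2 : forall x, finv (f x) = x)
  (h : X -> R) (vh : R)
  (Hvh : is_lub (fun r => exists x, r = Rabs (h x)) vh)
  (m l : nat) (Hm : (1 <= m)%nat) (Hlm : (m < l)%nat)
  (beta : R) (Hb0 : 0 < beta) (Hb1 : beta < 1)
  (Htb : beta * (1 + INR (m - 1) / INR (l - m)) < 1) :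
  forall x : X,
    eucl_norm m (fun k => ztilde finv h beta l m k x - zeta finv h beta k x)
    <= binomR (l - 1) (m - 1) * sqrt (INR m) * vh
       * ((1 - beta) / (1 - beta * (1 + INR (m - 1) / INR (l - m))))
       * (beta * (1 + INR (m - 1) / INR (l - m)))
       * beta ^ (l - m).
Proof.
  intro x.
  assert (Hh : forall y, Rabs (h y) <= vh) by (intro y; apply Hvh; now exists y).
  replace (l - 1)%nat with (m - 1 + (l - m))%nat by lia.
  eapply Rle_trans.
  - apply eucl_norm_le; [exact Hm|]. intros k Hk.
    apply (truncation_error_le finv h vh beta (m - 1));
      [exact Hh | lra | lia | lia | exact Htb].
  - right; ring.
Qed.
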